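(* Let $E=\ell^\infty(\mathbb N^2)$ (complex), let $\mathcal X$ be its closed unit ball with the weak-* topology, with elements written $x=(x_{j,k})_{j,k=1}^\infty$, and let $\mathcal A$ be the uniform algebra on $\mathcal X$ generated by the coordinate projections $p_{j,k}(x)=x_{j,k}$. Then there is a unital endomorphism of $\mathcal A$ which is a Riesz operator but is not power compact. Specifically, the map $\phi:\mathcal X\to\mathcal X$, $(\phi(x))_{j,k}=x_{j,k+1}/(k+1)$, induces such an endomorphism $Tf=f\circ\phi$.
   Context: $\mathcal X$ with the weak-* topology is compact metrizable; the uniform algebra generated by the $p_{j,k}$ is the closure in $C(\mathcal X)$ (supremum norm) of the polynomials in $1$ and the $p_{j,k}$. A bounded operator $T$ is a Riesz operator if $\lim_{n}\left[\inf\{\|T^n-K\|:K \text{ compact}\}\right]^{1/n}=0$; it is power compact if $T^N$ is compact for some positive integer $N$. *)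

From Stdlib Require Import Reals.
From Coquelicot Require Import Coquelicot.
Open Scope R_scope.

(* Points of E = l^oo(N^2) (complex); indices are 0-based here. *)
Definition pt := nat -> nat -> C.

Definition inX (x : pt) : Prop := forall j k, Cmod (x j k) <= 1.

(* Functions on X (values off X are irrelevant). *)
Definition fn := pt -> C.

Definition eqX (f g : fn) : Prop := forall x, inX x -> f x = g x.

Inductive polyfun : fn -> Prop :=
  | pf_const (c : C) : polyfun (fun _ => c)
  | pf_coord (j k : nat) : polyfun (fun x => x j k)
  | pf_add f g : polyfun f -> polyfun g -> polyfun (fun x => Cplus (f x) (g x))
  | pf_mul f g : polyfun f -> polyfun g -> polyfun (fun x => Cmult (f x) (g x)).

Definition supnorm (f : fn) : Rbar :=
  Lub_Rbar (fun r => exists x, inX x /\ r = Cmod (f x)).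

Definition in_A (f : fn) : Prop :=
  forall eps : R, 0 < eps ->
    exists P, polyfun P /\ forall x, inX x -> Cmod (Cminus (f x) (P x)) <= eps.

Definition op := fn -> fn.

Definition op_sub (S K : op) : op := fun f x => Cminus (S f x) (K f x).

Definition op_pow (S : op) (n : nat) : op := fun f => Nat.iter n S f.

Definition lin_endo (S : op) : Prop :=
  (forall f, in_A f -> in_A (S f)) /\
  (forall f g, in_A f -> in_A g -> eqX f g -> eqX (S f) (S g)) /\
  (forall f g, in_A f -> in_A g ->
     eqX (S (fun x => Cplus (f x) (g x))) (fun x => Cplus (S f x) (S g x))) /\
  (forall (c : C) f, in_A f ->
     eqX (S (fun x => Cmult c (f x))) (fun x => Cmult c (S f x))).

Definition opnorm (S : op) : Rbar :=
  Lub_Rbar (fun r => exists f, in_A f /\ Rbar_le (supnorm f) 1 /\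
                               supnorm (S f) = Finite r).

(* Compact operator on A: linear endomorphism mapping the unit ball to a
   relatively compact set (every sequence in the image of the unit ball has
   a subsequence converging in A; A is a metric space). *)
Definition compact_op (K : op) : Prop :=
  lin_endo K /\
  forall u : nat -> fn,
    (forall n, in_A (u n) /\ Rbar_le (supnorm (u n)) 1) ->
    exists (s : nat -> nat) (g : fn),
      (forall n, (s n < s (S n))%nat) /\ in_A g /\
      is_lim_seq (fun n => supnorm (fun x => Cminus (K (u (s n)) x) (g x)))
                 (Finite 0).

Definition ess_norm_pow (S : op) (n : nat) : Rbar :=
  Glb_Rbar (fun r => exists K, compact_op K /\
                       opnorm (op_sub (op_pow S n) K) = Finite r).

Definition nroot (a : R) (n : nat) : R :=
  if Rle_dec a 0 then 0 else Rpower a (/ INR n).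

Definition riesz_op (S : op) : Prop :=
  is_lim_seq (fun n => nroot (real (ess_norm_pow S n)) n) (Finite 0).

Definition power_compact (S : op) : Prop :=
  exists N : nat, (1 <= N)%nat /\ compact_op (op_pow S N).

(* The map phi: (phi x)_{j,k} = x_{j,k+1}/(k+1) in 1-based indexing,
   i.e. x j (k+1) / (k+2) in 0-based indexing. *)
Definition phi (x : pt) : pt :=
  fun j k => Cdiv (x j (S k)) (RtoC (INR (S (S k)))).

Definition Tphi : op := fun f x => f (phi x).

(* T^n f = f o phi^n, and phi^n maps the ball X into the points all of whose coordinates
   have modulus at most 1/n!.  A Schwarz lemma for the unit ball of A, namely
   |f y - f 0| <= r/(1-r) when every |y_jk| <= r < 1, therefore gives ||T^n - K|| <= 2/n!
   for the rank-one compact operator K f = f 0, so the essential norms of T^n decay like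
   1/n! and T is Riesz.  The Schwarz lemma is proved for polynomials and passes to A by
   uniform approximation: on the complex line through 0 and y/r a polynomial restricts to a
   one-variable polynomial bounded on the unit circle, whose coefficients obey Cauchy's
   estimates, computed exactly as discrete Fourier sums at roots of unity of large order.
   T is not power compact: T^N maps the bounded sequence of coordinates p_{m,0} to
   c p_{m,N} with c > 0, and these are pairwise at uniform distance >= c on X, so no
   subsequence converges in A. *)

From Stdlib Require Import Reals Rtopology Arith Lra Lia Psatz.
From Stdlib Require Import FunctionalExtensionality IndefiniteDescription.
From Coquelicot Require Import Coquelicot.
Open Scope R_scope.

Definition z0 : pt := fun _ _ => RtoC 0.

Lemma inX_z0 : inX z0.
Proof. intros j k; unfold z0; rewrite Cmod_0; lra. Qed.

Lemma supnorm_ge f x : inX x -> Rbar_le (Cmod (f x)) (supnorm f).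
Proof.
  intros Hx. apply (proj1 (Lub_Rbar_correct _)). eauto.
Qed.

Lemma supnorm_le f M : (forall x, inX x -> Cmod (f x) <= M) -> Rbar_le (supnorm f) M.
Proof.
  intros H. apply (proj2 (Lub_Rbar_correct _)). intros r [x [Hx ->]]. apply H, Hx.
Qed.

Lemma supnorm_bounded f M : (forall x, inX x -> Cmod (f x) <= M) ->
  exists s, supnorm f = Finite s /\ s <= M /\ forall x, inX x -> Cmod (f x) <= s.
Proof.
  intros H. pose proof (supnorm_le f M H) as Hle. pose proof (supnorm_ge f z0 inX_z0) as Hge.
  destruct (supnorm f) as [s| |] eqn:E; simpl in *; try tauto.
  exists s. repeat split; auto.
  intros x Hx. pose proof (supnorm_ge f x Hx) as Hx'. rewrite E in Hx'. exact Hx'.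
Qed.

Lemma Cmod_le_supnorm f M x : Rbar_le (supnorm f) (Finite M) -> inX x -> Cmod (f x) <= M.
Proof.
  intros H Hx. pose proof (supnorm_ge f x Hx). destruct (supnorm f); simpl in *; try tauto. lra.
Qed.

Lemma supnorm_Cmod_const f c : (forall x, inX x -> Cmod (f x) = c) -> supnorm f = Finite c.
Proof.
  intros H. destruct (supnorm_bounded f c) as [s [Es [Hs Hf]]].
  { intros x Hx; rewrite H; auto; lra. }
  rewrite Es. f_equal. pose proof (Hf z0 inX_z0) as H0. rewrite H in H0 by apply inX_z0. lra.
Qed.

Lemma polyfun_inA P : polyfun P -> in_A P.
Proof.
  intros H eps He. exists P. split; auto. intros. unfold Cminus. rewrite Cplus_opp_r, Cmod_0. lra.
Qed.

Lemma polyfun_bounded P : polyfun P -> exists M, forall x, inX x -> Cmod (P x) <= M.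
Proof.
  induction 1 as [c|j k|f g _ [M1 H1] _ [M2 H2]|f g _ [M1 H1] _ [M2 H2]].
  - exists (Cmod c). intros; lra.
  - exists 1. intros x Hx; apply Hx.
  - exists (M1 + M2). intros x Hx. eapply Rle_trans. apply Cmod_triangle.
    specialize (H1 x Hx). specialize (H2 x Hx). lra.
  - exists (M1 * M2). intros x Hx. rewrite Cmod_mult. specialize (H1 x Hx). specialize (H2 x Hx).
    pose proof (Cmod_ge_0 (f x)). pose proof (Cmod_ge_0 (g x)). nra.
Qed.

Lemma inA_bounded g : in_A g -> exists M, forall x, inX x -> Cmod (g x) <= M.
Proof.
  intros Hg. destruct (Hg 1 ltac:(lra)) as [P [HP HgP]]. destruct (polyfun_bounded P HP) as [M HM].
  exists (M + 1). intros x Hx. replace (g x) with (Cplus (P x) (Cminus (g x) (P x))) by ring.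
  eapply Rle_trans. apply Cmod_triangle. specialize (HM x Hx). specialize (HgP x Hx). lra.
Qed.

Lemma opnorm_le S b :
  (forall f, in_A f -> Rbar_le (supnorm f) 1 -> forall x, inX x -> Cmod (S f x) <= b) ->
  exists r, opnorm S = Finite r /\ r <= b.
Proof.
  intros HS. unfold opnorm.
  set (E := fun r => exists f, in_A f /\ Rbar_le (supnorm f) 1 /\ supnorm (S f) = Finite r).
  assert (E_le : forall r, E r -> r <= b).
  { intros r [f [Hf [Hf1 Er]]].
    destruct (supnorm_bounded (S f) b (HS f Hf Hf1)) as [s [Es [Hs _]]].
    rewrite Es in Er. injection Er as <-. exact Hs. }
  assert (E_inhabited : exists r, E r).
  { assert (H0 : in_A (fun _ => RtoC 0)) by apply polyfun_inA, pf_const.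
    assert (H1 : Rbar_le (supnorm (fun _ => RtoC 0)) 1)
      by (apply supnorm_le; intros; rewrite Cmod_0; lra).
    destruct (supnorm_bounded _ b (HS _ H0 H1)) as [r [Er _]].
    exists r, (fun _ => RtoC 0). auto. }
  destruct E_inhabited as [r0 Hr0].
  destruct (Lub_Rbar_correct E) as [U1 U2].
  pose proof (U1 r0 Hr0) as Hlb.
  assert (Hub : Rbar_le (Lub_Rbar E) b) by (apply U2; intros r Hr; apply E_le, Hr).
  destruct (Lub_Rbar E); simpl in *; try tauto. eauto.
Qed.

Lemma ess_norm_pow_le S n K b : compact_op K -> 0 <= b ->
  (forall f, in_A f -> Rbar_le (supnorm f) 1 -> forall x, inX x ->
     Cmod (Cminus (op_pow S n f x) (K f x)) <= b) ->
  real (ess_norm_pow S n) <= b.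
Proof.
  intros HK Hb HS. destruct (opnorm_le (op_sub (op_pow S n) K) b HS) as [r [Er Hr]].
  unfold ess_norm_pow.
  destruct (Glb_Rbar_correct (fun r => exists K, compact_op K /\
              opnorm (op_sub (op_pow S n) K) = Finite r)) as [G _].
  pose proof (G r (ex_intro _ K (conj HK Er))).
  destruct (Glb_Rbar _); simpl in *; try tauto; lra.
Qed.

Lemma nroot_ge0 a n : 0 <= nroot a n.
Proof. unfold nroot. destruct Rle_dec. lra. left; apply exp_pos. Qed.

Lemma nroot_le a b n : a <= b -> 0 < b -> nroot a n <= nroot b n.
Proof.
  intros Hab Hb. unfold nroot. destruct (Rle_dec a 0); destruct (Rle_dec b 0); try lra.
  - left; apply exp_pos.
  - apply Rle_Rpower_l; [|lra]. destruct n.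
    + simpl. rewrite Rinv_0. lra.
    + apply Rlt_le, Rinv_0_lt_compat, lt_0_INR; lia.
Qed.

Lemma nroot_pow q n : 0 < q -> (1 <= n)%nat -> nroot (q ^ n) n = q.
Proof.
  intros Hq Hn. unfold nroot. destruct (Rle_dec (q ^ n) 0) as [H|_].
  - pose proof (pow_lt q n Hq). lra.
  - rewrite <- Rpower_pow, Rpower_mult, Rinv_r by (auto; apply not_0_INR; lia).
    apply Rpower_1, Hq.
Qed.

Lemma inv_fact_le_pow c q : 0 <= c -> 0 < q ->
  exists N, forall n, (N <= n)%nat -> c / INR (fact n) <= q ^ n.
Proof.
  intros Hc Hq.
  destruct (cv_speed_pow_fact (/ q) (/ (c + 1))) as [N HN].
  { apply Rinv_0_lt_compat; lra. }
  exists N. intros n Hn. specialize (HN n Hn).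
  pose proof (INR_fact_lt_0 n) as Hf. pose proof (pow_lt q n Hq) as Hqn.
  unfold Rdist in HN. rewrite Rminus_0_r, pow_inv, Rabs_right in HN.
  2: { apply Rle_ge, Rlt_le, Rdiv_lt_0_compat; auto. apply Rinv_0_lt_compat; auto. }
  apply (Rmult_lt_compat_l ((c + 1) * q ^ n)) in HN; [|nra].
  replace ((c + 1) * q ^ n * (/ q ^ n / INR (fact n))) with ((c + 1) / INR (fact n)) in HN
    by (field; lra).
  replace ((c + 1) * q ^ n * / (c + 1)) with (q ^ n) in HN by (field; lra).
  assert (c / INR (fact n) <= (c + 1) / INR (fact n)).
  { unfold Rdiv. apply Rmult_le_compat_r; [left; apply Rinv_0_lt_compat|]; lra. }
  lra.
Qed.

Lemma riesz_op_of_ess_norm_le S c n0 : 0 <= c ->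
  (forall n, (n0 <= n)%nat -> real (ess_norm_pow S n) <= c / INR (fact n)) -> riesz_op S.
Proof.
  intros Hc Hess. apply is_lim_seq_Reals. intros eps He.
  destruct (inv_fact_le_pow c (eps / 2) Hc ltac:(lra)) as [N HN].
  exists (N + n0 + 1)%nat. intros n Hn. unfold Rdist.
  rewrite Rminus_0_r, Rabs_right by (apply Rle_ge, nroot_ge0).
  eapply Rle_lt_trans.
  - apply (nroot_le _ ((eps / 2) ^ n)); [|apply pow_lt; lra].
    eapply Rle_trans; [apply Hess | apply HN]; lia.
  - rewrite nroot_pow by (lra || lia). lra.
Qed.

(* [cpoly D Q]: [Q] is a polynomial function of degree [< D], in Horner form. *)
Fixpoint cpoly (D : nat) (Q : C -> C) : Prop :=
  match D with
  | O => forall l, Q l = RtoC 0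
  | S D => exists c Q', cpoly D Q' /\ forall l, Q l = Cplus c (Cmult l (Q' l))
  end.

Lemma cpoly_ext D Q Q2 : cpoly D Q -> (forall l, Q l = Q2 l) -> cpoly D Q2.
Proof.
  destruct D; simpl; intros H E.
  - intros l; rewrite <- E; auto.
  - destruct H as [c [Q' [H1 H2]]]. exists c, Q'. split; auto. intros l; rewrite <- E; auto.
Qed.

Lemma cpoly_zero D : cpoly D (fun _ => RtoC 0).
Proof.
  induction D; simpl; auto. exists (RtoC 0), (fun _ => RtoC 0). split; auto. intros; ring.
Qed.

Lemma cpoly_S D Q : cpoly D Q -> cpoly (S D) Q.
Proof.
  revert Q; induction D; intros Q H.
  - exists (RtoC 0), (fun _ => RtoC 0). split; [apply cpoly_zero|]. intros l; rewrite H; ring.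
  - destruct H as [c [Q' [H1 H2]]]. exists c, Q'. split; auto.
Qed.

Lemma cpoly_le D D' Q : (D <= D')%nat -> cpoly D Q -> cpoly D' Q.
Proof. induction 1; auto. intros; apply cpoly_S; auto. Qed.

Lemma cpoly_add D Q1 Q2 : cpoly D Q1 -> cpoly D Q2 -> cpoly D (fun l => Cplus (Q1 l) (Q2 l)).
Proof.
  revert Q1 Q2; induction D; simpl; intros Q1 Q2 H1 H2.
  - intros l; rewrite H1, H2; ring.
  - destruct H1 as [c [Q' [H1 E1]]], H2 as [d [R' [H2 E2]]].
    exists (Cplus c d), (fun l => Cplus (Q' l) (R' l)). split; auto.
    intros l; rewrite E1, E2; ring.
Qed.

Lemma cpoly_scal D Q a : cpoly D Q -> cpoly D (fun l => Cmult a (Q l)).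
Proof.
  revert Q; induction D; simpl; intros Q H.
  - intros l; rewrite H; ring.
  - destruct H as [c [Q' [H1 E1]]]. exists (Cmult a c), (fun l => Cmult a (Q' l)). split; auto.
    intros l; rewrite E1; ring.
Qed.

Lemma cpoly_mul D1 D2 Q1 Q2 :
  cpoly D1 Q1 -> cpoly D2 Q2 -> cpoly (D1 + D2) (fun l => Cmult (Q1 l) (Q2 l)).
Proof.
  revert Q1; induction D1; intros Q1 H1 H2.
  - eapply cpoly_ext. apply (cpoly_zero (0 + D2)). intros l; simpl in H1; rewrite H1; ring.
  - destruct H1 as [c [Q' [H1 E1]]].
    destruct (cpoly_S _ _ H2) as [c2 [Q2' [H3 E2]]].
    exists (Cmult c c2), (fun l => Cplus (Cmult c (Q2' l)) (Cmult (Q' l) (Q2 l))). split.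
    + apply cpoly_add; [|apply IHD1; auto].
      apply cpoly_scal. eapply cpoly_le; [|exact H3]. lia.
    + intros l. rewrite E1, (E2 l). ring.
Qed.

Definition scale (a : C) (z : pt) : pt := fun j k => Cmult a (z j k).

Lemma scale_inX a z : Cmod a <= 1 -> inX z -> inX (scale a z).
Proof.
  intros Ha Hz j k. unfold scale. rewrite Cmod_mult. specialize (Hz j k).
  pose proof (Cmod_ge_0 a). pose proof (Cmod_ge_0 (z j k)). nra.
Qed.

Lemma polyfun_on_line P z : polyfun P -> exists D, cpoly D (fun l => P (scale l z)).
Proof.
  induction 1 as [c|j k|f g _ [D1 H1] _ [D2 H2]|f g _ [D1 H1] _ [D2 H2]].
  - exists 1%nat. exists c, (fun _ => RtoC 0). split; [apply cpoly_zero|]. intros; ring.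
  - exists 2%nat. exists (RtoC 0), (fun _ => z j k). split.
    + exists (z j k), (fun _ => RtoC 0). split; [apply cpoly_zero|]. intros; ring.
    + intros l. unfold scale. ring.
  - exists (D1 + D2)%nat. apply cpoly_add; [apply (cpoly_le D1) | apply (cpoly_le D2)]; auto; lia.
  - exists (D1 + D2)%nat. apply cpoly_mul; auto.
Qed.

Fixpoint csum (f : nat -> C) (n : nat) : C :=
  match n with O => RtoC 0 | S n => Cplus (csum f n) (f n) end.

Lemma csum_ext f g n : (forall k, (k < n)%nat -> f k = g k) -> csum f n = csum g n.
Proof. induction n; simpl; intros H; auto. rewrite IHn, H; auto. Qed.

Lemma csum_plus f g n : csum (fun k => Cplus (f k) (g k)) n = Cplus (csum f n) (csum g n).
Proof. induction n; simpl. ring. rewrite IHn; ring. Qed.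

Lemma csum_scal a f n : csum (fun k => Cmult a (f k)) n = Cmult a (csum f n).
Proof. induction n; simpl. ring. rewrite IHn; ring. Qed.

Lemma csum_one n : csum (fun _ => RtoC 1) n = RtoC (INR n).
Proof. induction n. reflexivity. cbn [csum]. rewrite IHn, S_INR, RtoC_plus. auto. Qed.

Lemma csum_Cmod_le f n B :
  (forall k, (k < n)%nat -> Cmod (f k) <= B) -> Cmod (csum f n) <= INR n * B.
Proof.
  induction n; cbn [csum]; intros H. simpl; rewrite Cmod_0; lra.
  rewrite S_INR. eapply Rle_trans. apply Cmod_triangle.
  assert (Cmod (csum f n) <= INR n * B) by (apply IHn; auto). specialize (H n ltac:(lia)). lra.
Qed.

Lemma csum_geom z n :
  Cmult (Cminus z (RtoC 1)) (csum (Cpow z) n) = Cminus (Cpow z n) (RtoC 1).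
Proof.
  induction n; cbn [csum]. simpl; ring.
  rewrite Cmult_plus_distr_l, IHn, Cpow_S. ring.
Qed.

Lemma csum_pow_eq0 z n : z <> RtoC 1 -> Cpow z n = RtoC 1 -> csum (Cpow z) n = RtoC 0.
Proof.
  intros Hz1 Hzn. pose proof (csum_geom z n) as E. rewrite Hzn in E.
  assert (Hz : Cminus z (RtoC 1) <> RtoC 0) by (apply Cminus_eq_contra; auto).
  replace (csum (Cpow z) n)
    with (Cmult (Cinv (Cminus z 1)) (Cmult (Cminus z 1) (csum (Cpow z) n))).
  - rewrite E. ring.
  - rewrite Cmult_assoc, Cinv_l; auto. ring.
Qed.

Definition cis (t : R) : C := (cos t, sin t).

Lemma cis_pow t n : Cpow (cis t) n = cis (INR n * t).
Proof.
  induction n.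
  - simpl. unfold cis. rewrite Rmult_0_l, cos_0, sin_0. reflexivity.
  - rewrite Cpow_S, IHn, S_INR. unfold cis, Cmult; simpl fst; simpl snd.
    replace ((INR n + 1) * t) with (t + INR n * t) by ring.
    rewrite cos_plus, sin_plus. apply injective_projections; simpl; ring.
Qed.

Lemma Cmod_cis t : Cmod (cis t) = 1.
Proof.
  unfold Cmod, cis; simpl fst; simpl snd. rewrite <- sqrt_1. f_equal.
  pose proof (sin2_cos2 t). unfold Rsqr in H. simpl. lra.
Qed.

Lemma cis_neq1 t : 0 < t < 2 * PI -> cis t <> RtoC 1.
Proof.
  intros H E. unfold cis, RtoC in E. injection E as E1 E2.
  destruct (Rlt_le_dec t PI).
  - pose proof (sin_gt_0 t ltac:(lra) r). lra.
  - destruct (Req_dec t PI).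
    + subst. rewrite cos_PI in E1. lra.
    + pose proof (sin_lt_0 t ltac:(lra) ltac:(lra)). lra.
Qed.

Definition unity_root (N : nat) : C := cis (2 * PI / INR N).

Lemma Cmod_unity_root_pow N k : Cmod (Cpow (unity_root N) k) = 1.
Proof. unfold unity_root. rewrite cis_pow. apply Cmod_cis. Qed.

Section DiscreteFourier.

Variable N : nat.
Hypothesis N_gt0 : (0 < N)%nat.

Local Notation w := (unity_root N).

Lemma unity_root_pow_N : Cpow w N = RtoC 1.
Proof.
  unfold unity_root. rewrite cis_pow. replace (INR N * (2 * PI / INR N)) with (2 * PI).
  - unfold cis. rewrite cos_2PI, sin_2PI. reflexivity.
  - field. apply not_0_INR; lia.
Qed.

Lemma unity_root_pow_neq1 e : (0 < e < N)%nat -> Cpow w e <> RtoC 1.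
Proof.
  intros H. unfold unity_root. rewrite cis_pow. apply cis_neq1.
  assert (0 < INR e) by (apply lt_0_INR; lia). assert (INR e < INR N) by (apply lt_INR; lia).
  pose proof PI_RGT_0.
  replace (INR e * (2 * PI / INR N)) with (2 * PI * (INR e / INR N)) by (field; lra).
  assert (0 < INR e / INR N < 1).
  { split. apply Rdiv_lt_0_compat; lra. apply (Rmult_lt_reg_r (INR N)); [lra|].
    unfold Rdiv. rewrite Rmult_assoc, Rinv_l by lra. lra. }
  nra.
Qed.

(* The [m]-th coefficient of [Q] read off its values at the [N]-th roots of unity
   ([w ^ (N - m)] is [w ^ -m]); it is exact when [Q] has degree [< N]. *)
Definition dft (Q : C -> C) (m : nat) : C :=
  Cmult (Cinv (RtoC (INR N)))
        (csum (fun k => Cmult (Q (Cpow w k)) (Cpow (Cpow w (N - m)) k)) N).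

Lemma dft_ext Q Q2 m : (forall l, Q l = Q2 l) -> dft Q m = dft Q2 m.
Proof. intros H. unfold dft. f_equal. apply csum_ext. intros; rewrite H; auto. Qed.

Lemma dft_const c m : (m < N)%nat -> dft (fun _ => c) m = if Nat.eqb m 0 then c else RtoC 0.
Proof.
  intros Hm. unfold dft. rewrite csum_scal.
  assert (HN : RtoC (INR N) <> RtoC 0).
  { intros E. apply RtoC_inj in E. apply (not_0_INR N); lia || auto. }
  destruct (Nat.eqb_spec m 0).
  - subst. rewrite Nat.sub_0_r, unity_root_pow_N.
    rewrite (csum_ext _ (fun _ => RtoC 1)) by (intros; apply Cpow_1_l).
    rewrite csum_one. field. auto.
  - rewrite csum_pow_eq0. ring.
    + apply unity_root_pow_neq1. lia.
    + rewrite <- Cpow_mult_r, Nat.mul_comm, Cpow_mult_r, unity_root_pow_N. apply Cpow_1_l.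
Qed.

(* Multiplying by the variable shifts the coefficients cyclically. *)
Lemma dft_horner c Q m : (m < N)%nat ->
  dft (fun l => Cplus c (Cmult l (Q l))) m =
  Cplus (if Nat.eqb m 0 then c else RtoC 0)
        (dft Q (if Nat.eqb m 0 then (N - 1)%nat else (m - 1)%nat)).
Proof.
  intros Hm. rewrite <- (dft_const c m) by auto. unfold dft.
  rewrite <- Cmult_plus_distr_l, <- csum_plus. f_equal. apply csum_ext. intros k Hk.
  assert (Hshift : Cmult w (Cpow w (N - m)) =
                   Cpow w (N - if Nat.eqb m 0 then (N - 1)%nat else (m - 1)%nat)).
  { rewrite <- Cpow_S. destruct (Nat.eqb_spec m 0).
    - subst. rewrite Cpow_S, Nat.sub_0_r, unity_root_pow_N.
      replace (N - (N - 1))%nat with 1%nat by lia. rewrite Cpow_1_r. ring.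
    - f_equal. lia. }
  rewrite <- Hshift, Cpow_mult_l. ring.
Qed.

Lemma dft_Cmod_le Q m B : (forall k, Cmod (Q (Cpow w k)) <= B) -> Cmod (dft Q m) <= B.
Proof.
  intros H. unfold dft. rewrite Cmod_mult.
  assert (0 < INR N) by (apply lt_0_INR; auto).
  rewrite <- RtoC_inv, Cmod_R, Rabs_right by (lra || apply Rle_ge, Rlt_le, Rinv_0_lt_compat; auto).
  assert (Hsum : Cmod (csum (fun k => Cmult (Q (Cpow w k)) (Cpow (Cpow w (N - m)) k)) N)
                 <= INR N * B).
  { apply csum_Cmod_le. intros k _.
    rewrite Cmod_mult, <- Cpow_mult_r, Cmod_unity_root_pow, Rmult_1_r.
    auto. }
  apply (Rmult_le_compat_l (/ INR N)) in Hsum; [|apply Rlt_le, Rinv_0_lt_compat; auto].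
  rewrite <- Rmult_assoc, Rinv_l in Hsum by lra. lra.
Qed.

Lemma dft_cpoly_vanish D Q m : cpoly D Q -> (D <= m < N)%nat -> dft Q m = RtoC 0.
Proof.
  revert Q m. induction D; intros Q m H Hm.
  - rewrite (dft_ext Q (fun _ => RtoC 0)), dft_const by (auto; lia).
    destruct (Nat.eqb m 0); reflexivity.
  - destruct H as [c [Q' [H1 E]]]. rewrite (dft_ext Q _ m E), dft_horner by lia.
    destruct (Nat.eqb_spec m 0); [lia|]. rewrite (IHD Q') by (auto; lia). ring.
Qed.

Lemma dft_horner_Cmod_le D Q c Q' B : cpoly D Q' -> (S D <= N)%nat ->
  (forall l, Q l = Cplus c (Cmult l (Q' l))) ->
  (forall m, (m < N)%nat -> Cmod (dft Q m) <= B) -> 0 <= B ->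
  Cmod c <= B /\ forall m, (m < N)%nat -> Cmod (dft Q' m) <= B.
Proof.
  intros HQ' HD E HB B0. split.
  - specialize (HB 0%nat N_gt0). rewrite (dft_ext Q _ 0 E), dft_horner in HB by lia.
    simpl in HB. rewrite (dft_cpoly_vanish D Q'), Cplus_0_r in HB by (auto; lia). auto.
  - intros m Hm. destruct (Nat.eq_dec m (N - 1)).
    + subst. rewrite (dft_cpoly_vanish D Q'), Cmod_0 by (auto; lia). auto.
    + specialize (HB (S m) ltac:(lia)). rewrite (dft_ext Q _ _ E), dft_horner in HB by lia.
      simpl in HB. rewrite Nat.sub_0_r, Cplus_0_l in HB. auto.
Qed.

Lemma cpoly_Cmod_le D Q B r : cpoly D Q -> (D <= N)%nat -> 0 <= B ->
  (forall m, (m < N)%nat -> Cmod (dft Q m) <= B) -> 0 <= r < 1 ->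
  Cmod (Q (RtoC r)) <= B / (1 - r).
Proof.
  revert Q. induction D; intros Q H HD B0 HB Hr.
  - simpl in H. rewrite H, Cmod_0. apply Rmult_le_pos; auto. apply Rlt_le, Rinv_0_lt_compat; lra.
  - destruct H as [c [Q' [H1 E]]].
    destruct (dft_horner_Cmod_le D Q c Q' B H1 HD E HB B0) as [Hc HB'].
    pose proof (IHD Q' H1 ltac:(lia) B0 HB' Hr) as IH.
    rewrite E. eapply Rle_trans. apply Cmod_triangle. rewrite Cmod_mult, Cmod_R, Rabs_right by lra.
    assert (r * Cmod (Q' r) <= r * (B / (1 - r))) by (apply Rmult_le_compat_l; lra).
    replace (B / (1 - r)) with (B + r * (B / (1 - r))) by (field; lra). lra.
Qed.

Lemma cpoly_sub0_Cmod_le D Q B r : cpoly D Q -> (D <= N)%nat -> 0 <= B ->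
  (forall m, (m < N)%nat -> Cmod (dft Q m) <= B) -> 0 <= r < 1 ->
  Cmod (Cminus (Q (RtoC r)) (Q (RtoC 0))) <= r * (B / (1 - r)).
Proof.
  intros H HD B0 HB Hr. destruct D.
  - simpl in H. rewrite !H. replace (Cminus 0 0) with (RtoC 0) by ring. rewrite Cmod_0.
    apply Rmult_le_pos; [lra|]. apply Rmult_le_pos; auto. apply Rlt_le, Rinv_0_lt_compat; lra.
  - destruct H as [c [Q' [H1 E]]].
    destruct (dft_horner_Cmod_le D Q c Q' B H1 HD E HB B0) as [_ HB'].
    pose proof (cpoly_Cmod_le D Q' B r H1 ltac:(lia) B0 HB' Hr) as IH.
    rewrite !E. replace (Cminus (Cplus c (Cmult r (Q' r))) (Cplus c (Cmult 0 (Q' 0))))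
      with (Cmult r (Q' r)) by ring.
    rewrite Cmod_mult, Cmod_R, Rabs_right by lra. apply Rmult_le_compat_l; lra.
Qed.

End DiscreteFourier.

Lemma cpoly_schwarz D Q B r : cpoly D Q ->
  (forall l, Cmod l = 1 -> Cmod (Q l) <= B) -> 0 <= r < 1 ->
  Cmod (Cminus (Q (RtoC r)) (Q (RtoC 0))) <= r * (B / (1 - r)).
Proof.
  intros HQ HB Hr.
  assert (B0 : 0 <= B).
  { eapply Rle_trans; [apply Cmod_ge_0 | apply (HB (RtoC 1)), Cmod_1]. }
  apply (cpoly_sub0_Cmod_le (S D) ltac:(lia) D); [exact HQ | lia | exact B0 | | exact Hr].
  intros m _. apply dft_Cmod_le; [lia|]. intros k. apply HB, Cmod_unity_root_pow.
Qed.

Lemma polyfun_schwarz P B y r : polyfun P -> (forall x, inX x -> Cmod (P x) <= B) ->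
  0 < r < 1 -> (forall j k, Cmod (y j k) <= r) ->
  Cmod (Cminus (P y) (P z0)) <= r * (B / (1 - r)).
Proof.
  intros HP HB Hr Hy.
  assert (Hrc : RtoC r <> RtoC 0) by (intros E; apply RtoC_inj in E; lra).
  set (z := scale (Cinv (RtoC r)) y).
  assert (Hz : inX z).
  { intros j k. unfold z, scale. rewrite Cmod_mult, Cmod_inv, Cmod_R, Rabs_right by (auto; lra).
    apply (Rmult_le_reg_l r); [lra|]. rewrite <- Rmult_assoc, Rinv_r by lra.
    specialize (Hy j k). lra. }
  destruct (polyfun_on_line P z HP) as [D HD].
  replace y with (scale (RtoC r) z).
  2: { extensionality j; extensionality k. unfold z, scale. field. auto. }
  replace z0 with (scale (RtoC 0) z).
  2: { extensionality j; extensionality k. unfold z0, scale. ring. }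
  apply (cpoly_schwarz D (fun l => P (scale l z))); auto; [|lra].
  intros l Hl. apply HB, scale_inX; auto; lra.
Qed.

Lemma inA_schwarz f M y r : in_A f -> (forall x, inX x -> Cmod (f x) <= M) ->
  0 < r < 1 -> (forall j k, Cmod (y j k) <= r) ->
  Cmod (Cminus (f y) (f z0)) <= r * (M / (1 - r)).
Proof.
  intros Hf HM Hr Hy.
  (* the approximation error [eps / c] enters three times, once amplified by [r / (1 - r)] *)
  set (c := 3 + r / (1 - r)).
  assert (Hc : 0 < c) by (unfold c; pose proof (Rdiv_lt_0_compat r (1 - r)); lra).
  apply le_epsilon. intros eps He.
  destruct (Hf (eps / c) ltac:(apply Rdiv_lt_0_compat; lra)) as [P [HP HfP]].
  assert (HPM : forall x, inX x -> Cmod (P x) <= M + eps / c).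
  { intros x Hx. replace (P x) with (Cminus (f x) (Cminus (f x) (P x))) by ring.
    eapply Rle_trans; [apply Cmod_triangle|]. rewrite Cmod_opp.
    specialize (HM x Hx). specialize (HfP x Hx). lra. }
  assert (Hy1 : inX y) by (intros j k; specialize (Hy j k); lra).
  pose proof (polyfun_schwarz P _ y r HP HPM Hr Hy) as HPy.
  replace (r * ((M + eps / c) / (1 - r)))
    with (r * (M / (1 - r)) + eps / c * (r / (1 - r))) in HPy by (field; lra).
  replace (Cminus (f y) (f z0)) with
    (Cplus (Cplus (Cminus (f y) (P y)) (Cminus (P y) (P z0))) (Copp (Cminus (f z0) (P z0))))
    by ring.
  pose proof (HfP y Hy1). pose proof (HfP z0 inX_z0).
  eapply Rle_trans; [apply Cmod_triangle|]. rewrite Cmod_opp.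
  eapply Rle_trans; [apply Rplus_le_compat_r, Cmod_triangle|].
  assert (eps / c * c = eps) by (field; lra). unfold c in *. nra.
Qed.

Lemma strict_mono_lt (s : nat -> nat) : (forall n, (s n < s (S n))%nat) ->
  forall m n, (m < n)%nat -> (s m < s n)%nat.
Proof. intros H m n Hmn. induction Hmn; [auto|]. specialize (H m0). lia. Qed.

Lemma is_lim_seq_inv_S : is_lim_seq (fun n => / INR (S n)) 0.
Proof.
  apply (is_lim_seq_incr_1 (fun n => / INR n)).
  replace (Finite 0) with (Rbar_inv p_infty) by reflexivity.
  apply is_lim_seq_inv; [apply is_lim_seq_INR | discriminate].
Qed.

Lemma bounded_subseq_cvg_R (a : nat -> R) : (forall n, Rabs (a n) <= 1) ->
  exists (s : nat -> nat) (l : R), (forall n, (s n < s (S n))%nat) /\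
    is_lim_seq (fun n => Rabs (a (s n) - l)) 0.
Proof.
  intros Ha.
  destruct (Bolzano_Weierstrass a (fun c => -1 <= c <= 1) (compact_P3 (-1) 1)) as [l Hl].
  { intros n. apply Rabs_le_between, Ha. }
  assert (Hnear : forall Nn : nat * nat,
            exists p, (fst Nn <= p)%nat /\ Rabs (a p - l) < / INR (S (snd Nn))).
  { intros [N n]. assert (Hp : 0 < / INR (S n)) by (apply Rinv_0_lt_compat, lt_0_INR; lia).
    destruct (Hl (disc l (mkposreal _ Hp)) N) as [p Hp'].
    - exists (mkposreal _ Hp). intros y Hy; exact Hy.
    - exists p. exact Hp'. }
  destruct (functional_choice _ Hnear) as [ch Hch].
  set (s := fix s n := match n with O => ch (O, O) | S m => ch (S (s m), S m) end).
  assert (Hs : forall n, Rabs (a (s n) - l) < / INR (S n)) by (destruct n; apply Hch).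
  exists s, l. split.
  - intros n. apply (Hch (S (s n), S n)).
  - apply (is_lim_seq_le_le (fun _ => 0) _ (fun n => / INR (S n))).
    + intros n. split; [apply Rabs_pos | left; apply Hs].
    + apply is_lim_seq_const.
    + apply is_lim_seq_inv_S.
Qed.

Lemma Cmod_le_Rabs_re_im (x : C) : Cmod x <= Rabs (fst x) + Rabs (snd x).
Proof.
  destruct x as [a b]. unfold Cmod; simpl fst; simpl snd.
  pose proof (Rabs_pos a). pose proof (Rabs_pos b).
  rewrite <- (sqrt_pow2 (Rabs a + Rabs b)) by lra.
  apply sqrt_le_1_alt. rewrite <- (pow2_abs a), <- (pow2_abs b). nra.
Qed.

Lemma bounded_subseq_cvg_C (u : nat -> C) : (forall n, Cmod (u n) <= 1) ->
  exists (s : nat -> nat) (l : C), (forall n, (s n < s (S n))%nat) /\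
    is_lim_seq (fun n => Cmod (Cminus (u (s n)) l)) 0.
Proof.
  intros Hu.
  destruct (bounded_subseq_cvg_R (fun n => fst (u n))) as [s1 [l1 [Hs1 H1]]].
  { intros n. eapply Rle_trans; [|apply (Hu n)].
    eapply Rle_trans; [|apply Rmax_Cmod]. apply Rmax_l. }
  destruct (bounded_subseq_cvg_R (fun n => snd (u (s1 n)))) as [s2 [l2 [Hs2 H2]]].
  { intros n. eapply Rle_trans; [|apply (Hu (s1 n))].
    eapply Rle_trans; [|apply Rmax_Cmod]. apply Rmax_r. }
  exists (fun n => s1 (s2 n)), (l1, l2). split.
  - intros n. apply strict_mono_lt; auto.
  - apply (is_lim_seq_subseq _ _ s2 (eventually_subseq s2 Hs2)) in H1.
    apply (is_lim_seq_le_le (fun _ => 0) _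
             (fun n => Rabs (fst (u (s1 (s2 n))) - l1) + Rabs (snd (u (s1 (s2 n))) - l2))).
    + intros n. split; [apply Cmod_ge_0 | apply Cmod_le_Rabs_re_im].
    + apply is_lim_seq_const.
    + replace (Finite 0) with (Rbar_plus 0 0) by (simpl; f_equal; ring).
      apply is_lim_seq_plus'; assumption.
Qed.

Definition eval0 : op := fun f _ => f z0.

Lemma compact_eval0 : compact_op eval0.
Proof.
  split; [split; [|split; [|split]]|].
  - intros f Hf eps He. destruct (Hf eps He) as [P [HP HfP]].
    exists (fun _ => P z0). split; [apply pf_const|]. intros; apply HfP, inX_z0.
  - intros f g _ _ E x _. apply E, inX_z0.
  - intros f g _ _ x _. reflexivity.
  - intros c f _ x _. reflexivity.
  - intros u Hu.
    destruct (bounded_subseq_cvg_C (fun n => u n z0)) as [s [l [Hs Hl]]].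
    { intros n. apply (Cmod_le_supnorm (u n)); [apply Hu | apply inX_z0]. }
    exists s, (fun _ => l). repeat split; auto.
    + apply polyfun_inA, pf_const.
    + eapply is_lim_seq_ext; [|exact Hl]. intros n.
      rewrite (supnorm_Cmod_const _ (Cmod (Cminus (u (s n) z0) l))); auto.
Qed.

Lemma INR_SS_neq0 k : RtoC (INR (S (S k))) <> RtoC 0.
Proof. intros E. apply RtoC_inj in E. pose proof (pos_INR (S k)). rewrite S_INR in E. lra. Qed.

Lemma phi_inX x : inX x -> inX (phi x).
Proof.
  intros Hx j k. unfold phi. rewrite Cmod_div, Cmod_R by apply INR_SS_neq0.
  pose proof (pos_INR (S k)). rewrite S_INR, Rabs_right by lra.
  apply (Rmult_le_reg_r (INR (S k) + 1)); [lra|].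
  unfold Rdiv. rewrite Rmult_assoc, Rinv_l by lra. specialize (Hx j (S k)). lra.
Qed.

Lemma polyfun_phi P : polyfun P -> polyfun (fun x => P (phi x)).
Proof.
  induction 1.
  - apply pf_const.
  - exact (pf_mul _ _ (pf_coord j (S k)) (pf_const (Cinv (RtoC (INR (S (S k))))))).
  - apply pf_add; auto.
  - apply pf_mul; auto.
Qed.

Lemma lin_endo_Tphi : lin_endo Tphi.
Proof.
  split; [|split; [|split]].
  - intros f Hf eps He. destruct (Hf eps He) as [P [HP HfP]].
    exists (fun x => P (phi x)). split; [apply polyfun_phi; auto|].
    intros x Hx. apply HfP, phi_inX, Hx.
  - intros f g _ _ E x Hx. apply E, phi_inX, Hx.
  - intros f g _ _ x _. reflexivity.
  - intros c f _ x _. reflexivity.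
Qed.

Lemma op_pow_Tphi n f x : op_pow Tphi n f x = f (Nat.iter n phi x).
Proof.
  revert x. induction n; intros x; [reflexivity|].
  change (op_pow Tphi (S n) f x) with (op_pow Tphi n f (phi x)).
  rewrite IHn, <- Nat.iter_succ_r. reflexivity.
Qed.

(* [iter_weight n k = (k+1)! / (k+n+1)!]: [phi^n] moves coordinate [k+n] to [k] with this factor. *)
Fixpoint iter_weight (n k : nat) : R :=
  match n with O => 1 | S n => iter_weight n k / INR (k + n + 2) end.

Lemma iter_phi_coord n x j k :
  Nat.iter n phi x j k = Cmult (x j (k + n)%nat) (RtoC (iter_weight n k)).
Proof.
  revert x. induction n; intros x.
  - simpl. rewrite Nat.add_0_r. ring.
  - rewrite Nat.iter_succ_r, IHn. unfold phi. simpl iter_weight.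
    replace (k + S n)%nat with (S (k + n)) by lia.
    replace (k + n + 2)%nat with (S (S (k + n))) by lia.
    rewrite RtoC_div by (intros E; apply (INR_SS_neq0 (k + n)); rewrite E; reflexivity).
    field. apply INR_SS_neq0.
Qed.

Lemma iter_weight_pos n k : 0 < iter_weight n k.
Proof.
  induction n; simpl; [lra|]. apply Rdiv_lt_0_compat; auto. apply lt_0_INR. lia.
Qed.

Lemma iter_weight_le_inv_fact n k : iter_weight n k <= / INR (fact n).
Proof.
  induction n; simpl iter_weight.
  - simpl. lra.
  - rewrite fact_simpl, mult_INR, Rinv_mult.
    pose proof (iter_weight_pos n k). pose proof (INR_fact_lt_0 n).
    assert (INR (S n) <= INR (k + n + 2)) by (apply le_INR; lia).
    assert (0 < INR (S n)) by (apply lt_0_INR; lia).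
    unfold Rdiv. rewrite Rmult_comm. apply Rmult_le_compat; try lra.
    + left; apply Rinv_0_lt_compat; lra.
    + apply Rinv_le_contravar; lra.
Qed.

Lemma iter_phi_Cmod_le n x j k : inX x -> Cmod (Nat.iter n phi x j k) <= / INR (fact n).
Proof.
  intros Hx. rewrite iter_phi_coord, Cmod_mult, Cmod_R.
  pose proof (iter_weight_pos n k). pose proof (iter_weight_le_inv_fact n k).
  rewrite Rabs_right by lra. specialize (Hx j (k + n)%nat).
  pose proof (Cmod_ge_0 (x j (k + n)%nat)). nra.
Qed.

Lemma Tphi_pow_sub_eval0_le n f x : (2 <= n)%nat -> in_A f -> Rbar_le (supnorm f) 1 ->
  inX x -> Cmod (Cminus (op_pow Tphi n f x) (eval0 f x)) <= 2 / INR (fact n).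
Proof.
  intros Hn Hf Hf1 Hx. rewrite op_pow_Tphi. unfold eval0.
  assert (Hfact : 2 <= INR (fact n)).
  { replace 2 with (INR 2) by reflexivity. apply le_INR.
    destruct n as [|[|n]]; try lia. simpl. pose proof (lt_O_fact n). lia. }
  set (r := / INR (fact n)).
  assert (Hr : 0 < r <= 1 / 2).
  { unfold r. split; [apply Rinv_0_lt_compat; lra|].
    apply (Rmult_le_reg_l (INR (fact n))); [lra|]. rewrite Rinv_r by lra. lra. }
  eapply Rle_trans.
  - apply (inA_schwarz f 1 _ r Hf); [|lra|].
    + intros y Hy. apply (Cmod_le_supnorm f); auto.
    + intros j k. apply iter_phi_Cmod_le, Hx.
  - replace (2 / INR (fact n)) with (2 * r) by (unfold r, Rdiv; ring).
    apply (Rmult_le_reg_r (1 - r)); [lra|].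
    replace (r * (1 / (1 - r)) * (1 - r)) with r by (field; lra). nra.
Qed.

Lemma riesz_op_Tphi : riesz_op Tphi.
Proof.
  apply (riesz_op_of_ess_norm_le Tphi 2 2); [lra|]. intros n Hn.
  apply (ess_norm_pow_le Tphi n eval0); [exact compact_eval0 | |].
  - apply Rlt_le, Rdiv_lt_0_compat; [lra | apply INR_fact_lt_0].
  - intros f Hf Hf1 x Hx. apply Tphi_pow_sub_eval0_le; auto.
Qed.

Lemma separated_not_cvg (v : nat -> fn) g c (s : nat -> nat) : 0 < c ->
  (forall m n, m <> n -> exists x, inX x /\ c <= Cmod (Cminus (v m x) (v n x))) ->
  (exists M, forall n x, inX x -> Cmod (Cminus (v n x) (g x)) <= M) ->
  (forall n, (s n < s (S n))%nat) ->
  ~ is_lim_seq (fun n => supnorm (fun x => Cminus (v (s n) x) (g x))) (Finite 0).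
Proof.
  intros Hc Hsep [M HM] Hs Hlim. apply is_lim_seq_Reals in Hlim.
  destruct (Hlim (c / 2) ltac:(lra)) as [n0 Hn0].
  assert (Hnear : forall n x, (n0 <= n)%nat -> inX x ->
                    Cmod (Cminus (v (s n) x) (g x)) < c / 2).
  { intros n x Hn Hx. specialize (Hn0 n Hn). unfold Rdist in Hn0. rewrite Rminus_0_r in Hn0.
    destruct (supnorm_bounded _ M (HM (s n))) as [r [Er [_ Hr]]].
    rewrite Er in Hn0. simpl in Hn0. specialize (Hr x Hx).
    pose proof (Rle_abs r). lra. }
  destruct (Hsep (s n0) (s (S n0))) as [x [Hx Hcx]].
  { specialize (Hs n0). lia. }
  pose proof (Hnear n0 x ltac:(lia) Hx). pose proof (Hnear (S n0) x ltac:(lia) Hx).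
  pose proof (Cmod_triangle (Cminus (v (s n0) x) (g x)) (Copp (Cminus (v (s (S n0)) x) (g x))))
    as Htri.
  rewrite Cmod_opp in Htri.
  replace (Cplus (Cminus (v (s n0) x) (g x)) (Copp (Cminus (v (s (S n0)) x) (g x))))
    with (Cminus (v (s n0) x) (v (s (S n0)) x)) in Htri by ring.
  lra.
Qed.

Definition unit_at (m k : nat) : pt :=
  fun j k' => if andb (Nat.eqb j m) (Nat.eqb k' k) then RtoC 1 else RtoC 0.

Lemma inX_unit_at m k : inX (unit_at m k).
Proof.
  intros j k'. unfold unit_at. destruct (andb _ _); [rewrite Cmod_1 | rewrite Cmod_0]; lra.
Qed.

Lemma not_power_compact_Tphi : ~ power_compact Tphi.
Proof.
  intros [N [_ [_ Hcomp]]].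
  destruct (Hcomp (fun m x => x m O)) as [s [g [Hs [Hg Hlim]]]].
  { intros m. split; [apply polyfun_inA, pf_coord|]. apply supnorm_le. intros x Hx; apply Hx. }
  destruct (inA_bounded g Hg) as [M HM].
  refine (separated_not_cvg (fun m => op_pow Tphi N (fun x => x m O)) g (iter_weight N 0) s
            _ _ _ Hs Hlim).
  - apply iter_weight_pos.
  - intros m n Hmn. exists (unit_at m N). split; [apply inX_unit_at|].
    rewrite !op_pow_Tphi, !iter_phi_coord. unfold unit_at. simpl (0 + N)%nat.
    rewrite !Nat.eqb_refl. replace (Nat.eqb n m) with false by (symmetry; apply Nat.eqb_neq; auto).
    simpl. replace (Cminus (Cmult 1 (iter_weight N 0)) (Cmult 0 (iter_weight N 0)))
      with (RtoC (iter_weight N 0)) by ring.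
    rewrite Cmod_R, Rabs_right; [lra | apply Rle_ge, Rlt_le, iter_weight_pos].
  - exists (1 + M). intros n x Hx. rewrite op_pow_Tphi.
    unfold Cminus. eapply Rle_trans; [apply Cmod_triangle|]. rewrite Cmod_opp.
    pose proof (iter_phi_Cmod_le N x n O Hx).
    assert (/ INR (fact N) <= 1).
    { rewrite <- Rinv_1. apply Rinv_le_contravar; [lra|].
      replace 1 with (INR 1) by reflexivity. apply le_INR, lt_O_fact. }
    specialize (HM x Hx). lra.
Qed.

Theorem theorem4p3 :
  (forall x, inX x -> inX (phi x)) /\
  lin_endo Tphi /\
  eqX (Tphi (fun _ => RtoC 1)) (fun _ => RtoC 1) /\
  (forall f g, in_A f -> in_A g ->
     eqX (Tphi (fun x => Cmult (f x) (g x))) (fun x => Cmult (Tphi f x) (Tphi g x))) /\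
  riesz_op Tphi /\
  ~ power_compact Tphi.
Proof.
  split; [exact phi_inX|].
  split; [exact lin_endo_Tphi|].
  split; [intros x _; reflexivity|].
  split; [intros f g _ _ x _; reflexivity|].
  split; [exact riesz_op_Tphi | exact not_power_compact_Tphi].
Qed.
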